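(* Let $\lambda>0$, $h\in C^2([0,1])$, $\varrho_\lambda(s)=\frac{\lambda}{(1-s)^2}\exp\!\big[-\frac{\lambda s}{1-s}\big]$ for $s\in[0,1)$, and $\tilde h(s)=h(s)-\int_0^1\mathrm dx\,\varrho_\lambda(x)h(x)$. Then the function $G:(0,1)\to\mathbb R$, $$G(s)=\frac1s\exp\Big[\frac{\lambda}{1-s}\Big]\int_0^s\mathrm dx\,\frac{\tilde h(x)}{(1-x)^2}\exp\Big[\frac{-\lambda}{1-x}\Big],$$ has a continuous extension to $[0,1]$ which lies in $C^2([0,1])$.
   Context: $C^2([0,1])$ denotes twice continuously differentiable functions on $[0,1]$, with one-sided derivatives at the endpoints. $h$ is real-valued. *)

From Stdlib Require Import Reals.
From Coquelicot Require Import Coquelicot.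
Open Scope R_scope.

Definition I01 (x : R) : Prop := 0 <= x <= 1.

Definition cont_within01 (f : R -> R) (x : R) : Prop :=
  filterlim f (within I01 (locally x)) (locally (f x)).

Definition deriv_within01 (f : R -> R) (x l : R) : Prop :=
  filterlim (fun y => (f y - f x) / (y - x))
    (within (fun y => I01 y /\ y <> x) (locally x)) (locally l).

Definition C2_01 (f : R -> R) : Prop :=
  exists f1 f2 : R -> R,
    (forall x, I01 x -> deriv_within01 f x (f1 x)) /\
    (forall x, I01 x -> deriv_within01 f1 x (f2 x)) /\
    (forall x, I01 x -> cont_within01 f2 x).

(* rho_lambda(s) = lambda/(1-s)^2 * exp(-lambda s/(1-s)) for s in [0,1);
   set to 0 at s >= 1 (its continuous extension at s = 1), so that the
   (improper) integral over [0,1] is an ordinary Riemann integral. *)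
Definition rho (lam s : R) : R :=
  if Rlt_dec s 1 then lam / (1 - s) ^ 2 * exp (- (lam * s / (1 - s))) else 0.

Definition htilde (lam : R) (h : R -> R) (s : R) : R :=
  h s - RInt (fun x => rho lam x * h x) 0 1.

Definition Gfun (lam : R) (h : R -> R) (s : R) : R :=
  / s * exp (lam / (1 - s)) *
  RInt (fun x => htilde lam h x / (1 - x) ^ 2 * exp (- lam / (1 - x))) 0 s.

(* Write G(s) = v(s)/s with v(s) = exp(lam/(1-s)) \int_0^s u k, where
   k(x) = exp(-lam/(1-x))/(1-x)^2 and u is a C^2 extension of h~ to R.  Then v solves
   v' = (lam v + u)/(1-s)^2, so v is C^3 on [0,1) with v(0) = 0, and G, G', G'' are
   v/s, (s v' - v)/s^2 and (s^2 v'' - 2 s v' + 2 v)/s^3, which have limits at 0 by the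
   mean value theorem.  Since \int_0^1 rho = 1, the integral of u k over [0,1]
   vanishes, so near 1 v is the tail -exp(lam/(1-s)) \int_s^1 u k.  Integrating by
   parts against exp(-lam/(1-x)), whose derivative is lam k, gives
   lam exp(lam/(1-s)) \int_s^1 (1-x)^n g k = (1-s)^n (g(1) + O(1-s)), which yields
   the limits of v, v', v'' at 1.  Finally, a function on (0,1) whose values and
   derivative have limits at both ends extends (again by the mean value theorem) to a
   function on [0,1] with one-sided derivatives at the endpoints. *)

From Stdlib Require Import Reals Lra Lia.
From Coquelicot Require Import Coquelicot.
Open Scope R_scope.

Lemma is_derive_eq (f : R -> R) (x l l' : R) : is_derive f x l -> l = l' -> is_derive f x l'.
Proof. now intros H <-. Qed.

(* Coquelicot states these rules with the [plus]/[minus] of a normed module; here they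
   are restated with [Rplus]/[Rminus] so that they apply to real expressions directly. *)
Lemma is_derive_Rplus (f g : R -> R) (x df dg : R) :
  is_derive f x df -> is_derive g x dg -> is_derive (fun t => f t + g t) x (df + dg).
Proof. exact (is_derive_plus f g x df dg). Qed.

Lemma is_derive_Rminus (f g : R -> R) (x df dg : R) :
  is_derive f x df -> is_derive g x dg -> is_derive (fun t => f t - g t) x (df - dg).
Proof. exact (is_derive_minus f g x df dg). Qed.

Lemma continuous_of_is_derive (f : R -> R) (x l : R) : is_derive f x l -> continuous f x.
Proof. intros Hf. apply (ex_derive_continuous (V := R_NormedModule)). now exists l. Qed.

Lemma exp_mul_exp_opp_div (a b : R) : exp (a / b) * exp (- a / b) = 1.
Proof. rewrite <- exp_plus, <- exp_0. f_equal. unfold Rdiv. ring. Qed.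

Lemma is_derive_of_quadratic_bound (f : R -> R) (x l C : R) :
  (forall y, Rabs (f y - f x - l * (y - x)) <= C * (y - x) ^ 2) -> is_derive f x l.
Proof.
  intros Hf. apply is_derive_Reals. intros eps Heps.
  assert (HC : 0 < Rabs C + 1) by (pose proof (Rabs_pos C); lra).
  assert (Hd : 0 < eps / (Rabs C + 1)) by (apply Rdiv_lt_0_compat; lra).
  exists (mkposreal _ Hd). simpl. intros h Hh0 Hh.
  assert (Hh' : 0 < Rabs h) by now apply Rabs_pos_lt.
  replace ((f (x + h) - f x) / h - l) with ((f (x + h) - f x - l * (x + h - x)) / h)
    by (field; exact Hh0).
  rewrite Rabs_div by exact Hh0.
  apply (Rmult_lt_reg_r (Rabs h)); [exact Hh'|].
  unfold Rdiv. rewrite Rmult_assoc, Rinv_l, Rmult_1_r by lra.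
  eapply Rle_lt_trans; [apply Hf|].
  replace (x + h - x) with h by ring. rewrite <- pow2_abs.
  apply (Rmult_lt_compat_r (Rabs C + 1)) in Hh; [|exact HC].
  unfold Rdiv in Hh. rewrite Rmult_assoc, Rinv_l, Rmult_1_r in Hh by lra.
  assert (HCh : C * Rabs h ^ 2 <= Rabs C * Rabs h ^ 2)
    by (apply Rmult_le_compat_r; [apply pow2_ge_0 | apply Rle_abs]).
  pose proof (Rabs_pos C). nra.
Qed.

Definition slope (f : R -> R) (x y : R) : R := (f y - f x) / (y - x).

Lemma derivable_pt_lim_slope (f : R -> R) (x l : R) :
  derivable_pt_lim f x l <-> filterlim (slope f x) (locally' x) (locally l).
Proof.
  rewrite filterlim_locally. split.
  - intros H eps. destruct (H eps (cond_pos eps)) as [d Hd].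
    exists d. intros y Hy Hyx. change (Rabs (y - x) < d) in Hy.
    change (Rabs (slope f x y - l) < eps). unfold slope.
    replace y with (x + (y - x)) at 1 by ring.
    apply Hd; [lra | exact Hy].
  - intros H eps Heps. destruct (H (mkposreal eps Heps)) as [d Hd].
    exists d. intros h Hh0 Hh.
    assert (Hslope : Rabs (slope f x (x + h) - l) < eps).
    { apply (Hd (x + h)); [|lra].
      change (Rabs (x + h - x) < d). now replace (x + h - x) with h by ring. }
    unfold slope in Hslope. now replace (x + h - x) with h in Hslope by ring.
Qed.

Lemma filterlim_within_loc {T U : Type} {F : (T -> Prop) -> Prop} {FF : Filter F}
    {G : (U -> Prop) -> Prop} (P Q : T -> Prop) (f : T -> U) :
  F (fun x => P x -> Q x) -> filterlim f (within Q F) G -> filterlim f (within P F) G.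
Proof.
  intros HPQ Hf A HA. specialize (Hf A HA). unfold filtermap, within in *.
  apply (filter_imp (fun x => (P x -> Q x) /\ (Q x -> A (f x)))); [tauto|].
  now apply filter_and.
Qed.

Lemma filterlim_within_or {T U : Type} {F : (T -> Prop) -> Prop} {FF : Filter F}
    {G : (U -> Prop) -> Prop} (P Q : T -> Prop) (f : T -> U) :
  filterlim f (within P F) G -> filterlim f (within Q F) G ->
  filterlim f (within (fun x => P x \/ Q x) F) G.
Proof.
  intros HP HQ A HA. unfold filtermap, within.
  apply (filter_imp (fun x => (P x -> A (f x)) /\ (Q x -> A (f x)))); [tauto|].
  apply filter_and; [apply HP | apply HQ]; exact HA.
Qed.

Lemma filterlim_within_empty {T U : Type} {F : (T -> Prop) -> Prop} {FF : Filter F}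
    {G : (U -> Prop) -> Prop} (P : T -> Prop) (f : T -> U) :
  F (fun x => ~ P x) -> filterlim f (within P F) G.
Proof.
  intros HP A _. unfold filtermap, within.
  apply (filter_imp (fun x => ~ P x)); [tauto | exact HP].
Qed.

Section FilterArith.

Context {T : Type} {F : (T -> Prop) -> Prop} {FF : Filter F}.

Lemma filterlim_Rplus (f g : T -> R) (a b : R) :
  filterlim f F (locally a) -> filterlim g F (locally b) ->
  filterlim (fun x => f x + g x) F (locally (a + b)).
Proof. intros Hf Hg. exact (filterlim_comp_2 f g plus Hf Hg (filterlim_plus a b)). Qed.

Lemma filterlim_Rmult (f g : T -> R) (a b : R) :
  filterlim f F (locally a) -> filterlim g F (locally b) ->
  filterlim (fun x => f x * g x) F (locally (a * b)).
Proof. intros Hf Hg. exact (filterlim_comp_2 f g mult Hf Hg (filterlim_mult a b)). Qed.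

Lemma filterlim_Rminus (f g : T -> R) (a b : R) :
  filterlim f F (locally a) -> filterlim g F (locally b) ->
  filterlim (fun x => f x - g x) F (locally (a - b)).
Proof.
  intros Hf Hg. apply (filterlim_Rplus f (fun x => - g x)); [exact Hf|].
  eapply filterlim_comp; [exact Hg | exact (filterlim_opp b)].
Qed.

Lemma filterlim_Rscal (c : R) (f : T -> R) (a : R) :
  filterlim f F (locally a) -> filterlim (fun x => c * f x) F (locally (c * a)).
Proof. intros Hf. apply filterlim_Rmult; [apply filterlim_const | exact Hf]. Qed.

End FilterArith.

Lemma filterlim_at_left_of_continuous (f : R -> R) (x : R) :
  continuous f x -> filterlim f (at_left x) (locally (f x)).
Proof. apply filterlim_filter_le_1, filter_le_within. Qed.

Lemma lim1_pow (k : nat) : filterlim (fun s => s ^ k) (at_left 1) (locally 1).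
Proof.
  assert (H : continuous (fun s => s ^ k) 1)
    by (apply (ex_derive_continuous (V := R_NormedModule)); auto_derive; easy).
  apply filterlim_at_left_of_continuous in H. now rewrite pow1 in H.
Qed.

Lemma lim1_inv_pow (k : nat) : filterlim (fun s => / s ^ k) (at_left 1) (locally 1).
Proof.
  assert (H : continuous (fun s => / s ^ k) 1)
    by (apply (ex_derive_continuous (V := R_NormedModule)); auto_derive; rewrite pow1; lra).
  apply filterlim_at_left_of_continuous in H. now rewrite pow1, Rinv_1 in H.
Qed.

Lemma mvt_slope_bound (f f' : R -> R) (a b l e : R) :
  a < b -> (forall t, a < t < b -> is_derive f t (f' t)) ->
  (forall t, a <= t <= b -> continuity_pt f t) -> (forall t, a <= t <= b -> Rabs (f' t - l) < e) ->
  Rabs ((f b - f a) / (b - a) - l) < e.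
Proof.
  intros Hab Hd Hc He.
  destruct (MVT_gen f a b f') as [c [Hc' Hfc]];
    rewrite ?Rmin_left, ?Rmax_right in * by lra; [exact Hd | exact Hc |].
  rewrite Hfc. replace (f' c * (b - a) / (b - a)) with (f' c) by (field; lra).
  now apply He.
Qed.

Lemma lim_at_right0_div_pow (phi psi : R -> R) (m : nat) :
  phi 0 = 0 -> (forall t, 0 <= t < 1 -> is_derive phi t (t ^ m * psi t)) -> continuous psi 0 ->
  filterlim (fun s => phi s / s ^ S m) (at_right 0) (locally (psi 0 / INR (S m))).
Proof.
  intros H0 Hd Hc. apply filterlim_locally. intros eps.
  destruct (proj1 (filterlim_locally _ _) Hc eps) as [d Hdd].
  exists (mkposreal _ (Rmin_pos _ _ (cond_pos d) Rlt_0_1)). simpl. intros s Hs Hs0.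
  change (Rabs (s - 0) < Rmin d 1) in Hs. rewrite Rminus_0_r, Rabs_pos_eq in Hs by lra.
  pose proof (Rmin_l d 1). pose proof (Rmin_r d 1).
  assert (Hm : INR (S m) <> 0) by (apply not_0_INR; lia).
  assert (Hsm : 0 < s ^ m) by (apply pow_lt; lra).
  (* D removes the leading term of phi; the mean value theorem bounds D s / s by s^m eps. *)
  set (D := fun t => phi t - psi 0 / INR (S m) * t ^ S m).
  assert (HD : forall t, 0 <= t < 1 -> is_derive D t (t ^ m * (psi t - psi 0))).
  { intros t Ht. apply (is_derive_eq _ _ (t ^ m * psi t - psi 0 / INR (S m) * (INR (S m) * 1 * t ^ m))).
    - apply is_derive_Rminus; [now apply Hd|].
      apply is_derive_scal, (is_derive_pow (fun t => t)). exact (is_derive_id t).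
    - field. exact Hm. }
  assert (Hslope : Rabs ((D s - D 0) / (s - 0) - 0) < s ^ m * eps).
  { apply (mvt_slope_bound D (fun t => t ^ m * (psi t - psi 0))); [lra | | |].
    - intros t Ht. apply HD. lra.
    - intros t Ht. apply derivable_continuous_pt. exists (t ^ m * (psi t - psi 0)).
      apply is_derive_Reals, HD. lra.
    - intros t Ht. rewrite Rminus_0_r, Rabs_mult, (Rabs_pos_eq (t ^ m)) by (apply pow_le; lra).
      assert (Hpsi : Rabs (psi t - psi 0) < eps).
      { apply (Hdd t). change (Rabs (t - 0) < d). rewrite Rminus_0_r, Rabs_pos_eq; lra. }
      apply (Rle_lt_trans _ (s ^ m * Rabs (psi t - psi 0))).
      + apply Rmult_le_compat_r; [apply Rabs_pos | apply pow_incr; lra].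
      + now apply Rmult_lt_compat_l. }
  change (Rabs (phi s / s ^ S m - psi 0 / INR (S m)) < eps).
  assert (HD0 : D 0 = 0) by (unfold D; rewrite H0; simpl; ring).
  rewrite HD0, !Rminus_0_r in Hslope.
  replace (phi s / s ^ S m - psi 0 / INR (S m)) with (D s / s / s ^ m)
    by (unfold D; rewrite <- tech_pow_Rmult; field; repeat split; lra || exact Hm).
  rewrite Rabs_div, (Rabs_pos_eq (s ^ m)) by lra.
  apply (Rmult_lt_reg_r (s ^ m)); [exact Hsm|].
  unfold Rdiv at 1. rewrite Rmult_assoc, Rinv_l, Rmult_1_r by lra. lra.
Qed.

Lemma is_derive_div_pow (f : R -> R) (k : nat) (s df : R) : s <> 0 -> is_derive f s df ->
  is_derive (fun t => f t / t ^ k) s ((s * df - INR k * f s) / s ^ S k).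
Proof.
  intros Hs Hf. apply (is_derive_eq _ _ _ _ (is_derive_div _ _ _ _ _ Hf
    (is_derive_pow (fun t => t) k s 1 (is_derive_id s)) (pow_nonzero s k Hs))).
  destruct k; simpl; field; [lra | split; [apply pow_nonzero|]; lra].
Qed.

Lemma is_derive_inv1m_pow (k : nat) (s : R) : s < 1 ->
  is_derive (fun t => (/ (1 - t)) ^ k) s (INR k * (/ (1 - s)) ^ S k).
Proof.
  intros Hs. apply (is_derive_eq _ _ (INR k * (/ (1 - s)) ^ 2 * (/ (1 - s)) ^ pred k)).
  - apply (is_derive_pow (fun t => / (1 - t))). auto_derive; [lra | field; lra].
  - destruct k; simpl; [ring | field; lra].
Qed.

Lemma is_derive_inv1m_pow_mul (k : nat) (W : R -> R) (s dW : R) : s < 1 -> is_derive W s dW ->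
  is_derive (fun t => (/ (1 - t)) ^ k * W t) s (INR k * (/ (1 - s)) ^ S k * W s + (/ (1 - s)) ^ k * dW).
Proof. intros Hs HW. apply Derive.is_derive_mult; [now apply is_derive_inv1m_pow | exact HW]. Qed.

Lemma RInt_lincomb (a b : R) (f g : R -> R) (lo hi : R) :
  ex_RInt f lo hi -> ex_RInt g lo hi ->
  RInt (fun x => a * f x + b * g x) lo hi = a * RInt f lo hi + b * RInt g lo hi.
Proof.
  intros Hf Hg.
  assert (Haf : ex_RInt (fun x => a * f x) lo hi) by exact (ex_RInt_scal f lo hi a Hf).
  assert (Hbg : ex_RInt (fun x => b * g x) lo hi) by exact (ex_RInt_scal g lo hi b Hg).
  transitivity (RInt (fun x => a * f x) lo hi + RInt (fun x => b * g x) lo hi).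
  - exact (RInt_plus (fun x => a * f x) (fun x => b * g x) lo hi Haf Hbg).
  - f_equal; [exact (RInt_scal f lo hi a Hf) | exact (RInt_scal g lo hi b Hg)].
Qed.

Lemma continuous_pow_1m (n : nat) (x : R) : continuous (fun y => (1 - y) ^ n) x.
Proof. apply (ex_derive_continuous (V := R_NormedModule)). auto_derive. easy. Qed.

Lemma is_derive_pow_1m (n : nat) (x : R) :
  is_derive (fun y => (1 - y) ^ n) x (- INR n * (1 - x) ^ pred n).
Proof. auto_derive; [easy | unfold Rminus; ring]. Qed.

(** * Extension of a C^2([0,1]) function to R *)

Definition taylor2 (c p0 p1 p2 x : R) : R := p0 + p1 * (x - c) + p2 * (x - c) ^ 2 / 2.

Lemma is_derive_taylor2 (c p0 p1 p2 x : R) :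
  is_derive (taylor2 c p0 p1 p2) x (taylor2 c p1 p2 0 x).
Proof. unfold taylor2. auto_derive; [easy | field]. Qed.

Definition ext01 (phi : R -> R) (a1 a2 b1 b2 x : R) : R :=
  if Rlt_dec x 0 then taylor2 0 (phi 0) a1 a2 x
  else if Rlt_dec 1 x then taylor2 1 (phi 1) b1 b2 x
  else phi x.

Lemma ext01_in (phi : R -> R) (a1 a2 b1 b2 x : R) : I01 x -> ext01 phi a1 a2 b1 b2 x = phi x.
Proof.
  unfold ext01, I01. intros Hx.
  destruct (Rlt_dec x 0); [lra|]. destruct (Rlt_dec 1 x); [lra|easy].
Qed.

Lemma ext01_le0 (phi : R -> R) (a1 a2 b1 b2 x : R) :
  x <= 0 -> ext01 phi a1 a2 b1 b2 x = taylor2 0 (phi 0) a1 a2 x.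
Proof.
  unfold ext01. intros Hx.
  destruct (Rlt_dec x 0); [easy|]. destruct (Rlt_dec 1 x); [lra|].
  replace x with 0 by lra. unfold taylor2. field.
Qed.

Lemma ext01_ge1 (phi : R -> R) (a1 a2 b1 b2 x : R) :
  1 <= x -> ext01 phi a1 a2 b1 b2 x = taylor2 1 (phi 1) b1 b2 x.
Proof.
  unfold ext01. intros Hx.
  destruct (Rlt_dec x 0); [lra|]. destruct (Rlt_dec 1 x); [easy|].
  replace x with 1 by lra. unfold taylor2. field.
Qed.

Lemma slope_within_ext (f g : R -> R) (A : R -> Prop) (x l : R) :
  (forall y, A y -> f y = g y) -> A x ->
  filterlim (slope g x) (within (fun y => A y /\ y <> x) (locally x)) (locally l) ->
  filterlim (slope f x) (within (fun y => A y /\ y <> x) (locally x)) (locally l).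
Proof.
  intros Hfg Hx. apply filterlim_within_ext.
  intros y [Hy _]. unfold slope. now rewrite !Hfg.
Qed.

Lemma slope_within_of_is_derive (f : R -> R) (A : R -> Prop) (x l : R) :
  is_derive f x l -> filterlim (slope f x) (within (fun y => A y /\ y <> x) (locally x)) (locally l).
Proof.
  intros Hf. apply (filterlim_within_loc _ (fun y => y <> x)).
  - now apply filter_forall.
  - now apply derivable_pt_lim_slope, is_derive_Reals.
Qed.

Section Ext01.

Variables (phi psi : R -> R) (a2 b2 : R).
Hypothesis Hphi : forall x, I01 x -> deriv_within01 phi x (psi x).

Let F := ext01 phi (psi 0) a2 (psi 1) b2.
Let F' := ext01 psi a2 0 b2 0.

(* Each of the three closed pieces of R either contains x or misses a neighbourhood of x. *)
Lemma slope_ext01_le0 (x : R) :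
  filterlim (slope F x) (within (fun y => y <= 0 /\ y <> x) (locally x)) (locally (F' x)).
Proof.
  destruct (Rle_lt_dec x 0) as [Hx|Hx].
  - unfold F'. rewrite ext01_le0 by exact Hx.
    apply (slope_within_ext _ (taylor2 0 (phi 0) (psi 0) a2)); [|exact Hx|].
    + intros y Hy. now apply ext01_le0.
    + apply slope_within_of_is_derive, is_derive_taylor2.
  - apply filterlim_within_empty.
    apply (locally_interval _ _ 0 (x + 1)); simpl; [lra | lra |]. intros y Hy _. lra.
Qed.

Lemma slope_ext01_ge1 (x : R) :
  filterlim (slope F x) (within (fun y => 1 <= y /\ y <> x) (locally x)) (locally (F' x)).
Proof.
  destruct (Rle_lt_dec 1 x) as [Hx|Hx].
  - unfold F'. rewrite ext01_ge1 by exact Hx.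
    apply (slope_within_ext _ (taylor2 1 (phi 1) (psi 1) b2)); [|exact Hx|].
    + intros y Hy. now apply ext01_ge1.
    + apply slope_within_of_is_derive, is_derive_taylor2.
  - apply filterlim_within_empty.
    apply (locally_interval _ _ (x - 1) 1); simpl; [lra | lra |]. intros y _ Hy. lra.
Qed.

Lemma slope_ext01_in (x : R) :
  filterlim (slope F x) (within (fun y => I01 y /\ y <> x) (locally x)) (locally (F' x)).
Proof.
  unfold I01. destruct (Rlt_le_dec x 0) as [Hx|Hx]; [|destruct (Rlt_le_dec 1 x) as [Hx'|Hx']].
  - apply filterlim_within_empty.
    apply (locally_interval _ _ (x - 1) 0); simpl; [lra | lra |]. intros y _ Hy. lra.
  - apply filterlim_within_empty.
    apply (locally_interval _ _ 1 (x + 1)); simpl; [lra | lra |]. intros y Hy _. lra.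
  - assert (Hx01 : I01 x) by (unfold I01; lra).
    unfold F'. rewrite ext01_in by exact Hx01.
    apply (slope_within_ext _ phi); [|exact Hx01 | now apply Hphi].
    intros y Hy. now apply ext01_in.
Qed.

Lemma is_derive_ext01 (x : R) : is_derive F x (F' x).
Proof.
  apply is_derive_Reals, derivable_pt_lim_slope.
  apply (filterlim_within_loc _
    (fun y => ((y <= 0 /\ y <> x) \/ (I01 y /\ y <> x)) \/ (1 <= y /\ y <> x))).
  - apply filter_forall. intros y Hyx. unfold I01. lra.
  - repeat apply filterlim_within_or;
      [apply slope_ext01_le0 | apply slope_ext01_in | apply slope_ext01_ge1].
Qed.

End Ext01.

Definition clamp01 (x : R) : R := Rmax 0 (Rmin 1 x).

Lemma clamp01_I01 (x : R) : I01 (clamp01 x).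
Proof. unfold clamp01, I01, Rmax, Rmin. repeat destruct Rle_dec; lra. Qed.

Lemma clamp01_lipschitz (x y : R) : Rabs (clamp01 y - clamp01 x) <= Rabs (y - x).
Proof.
  unfold clamp01, Rmax, Rmin. unfold Rabs.
  repeat destruct Rle_dec; repeat destruct Rcase_abs; lra.
Qed.

Lemma filterlim_clamp01 (x : R) :
  filterlim clamp01 (locally x) (within I01 (locally (clamp01 x))).
Proof.
  intros A [d Hd]. exists d. intros y Hy. apply Hd; [|apply clamp01_I01].
  change (Rabs (clamp01 y - clamp01 x) < d). change (Rabs (y - x) < d) in Hy.
  eapply Rle_lt_trans; [apply clamp01_lipschitz | exact Hy].
Qed.

Lemma continuous_ext01 (phi : R -> R) :
  (forall x, I01 x -> cont_within01 phi x) -> forall x, continuous (ext01 phi 0 0 0 0) x.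
Proof.
  intros Hphi x.
  apply (continuous_ext (fun y => phi (clamp01 y))).
  - intros y. unfold ext01, clamp01, taylor2, Rmax, Rmin.
    destruct (Rlt_dec y 0); [|destruct (Rlt_dec 1 y)];
      repeat destruct Rle_dec; first [lra | field | f_equal; lra].
  - eapply filterlim_comp; [apply filterlim_clamp01 | apply Hphi, clamp01_I01].
Qed.

Lemma C2_01_extension (h : R -> R) : C2_01 h ->
  exists H H1 H2 : R -> R, (forall x, I01 x -> H x = h x) /\ (forall x, is_derive H x (H1 x)) /\
    (forall x, is_derive H1 x (H2 x)) /\ (forall x, continuous H2 x).
Proof.
  intros [h1 [h2 [D1 [D2 C2]]]].
  exists (ext01 h (h1 0) (h2 0) (h1 1) (h2 1)), (ext01 h1 (h2 0) 0 (h2 1) 0), (ext01 h2 0 0 0 0).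
  split; [|split; [|split]].
  - intros x Hx. now apply ext01_in.
  - exact (is_derive_ext01 h h1 (h2 0) (h2 1) D1).
  - exact (is_derive_ext01 h1 h2 0 0 D2).
  - exact (continuous_ext01 h2 C2).
Qed.

(** * Gluing boundary values *)

Definition glue (g : R -> R) (a b s : R) : R :=
  if Rle_dec s 0 then a else if Rlt_dec s 1 then g s else b.

Lemma glue_in (g : R -> R) (a b s : R) : 0 < s < 1 -> glue g a b s = g s.
Proof. intros Hs. unfold glue. destruct (Rle_dec s 0); [lra|]. now destruct (Rlt_dec s 1); [|lra]. Qed.

Lemma glue_le0 (g : R -> R) (a b s : R) : s <= 0 -> glue g a b s = a.
Proof. intros Hs. unfold glue. now destruct (Rle_dec s 0). Qed.

Lemma glue_ge1 (g : R -> R) (a b s : R) : 1 <= s -> glue g a b s = b.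
Proof. intros Hs. unfold glue. destruct (Rle_dec s 0); [lra|]. now destruct (Rlt_dec s 1); [lra|]. Qed.

Lemma locally_glue_in (g : R -> R) (a b x : R) : 0 < x < 1 ->
  locally x (fun y => g y = glue g a b y).
Proof.
  intros Hx. apply (locally_interval _ _ 0 1); simpl; [lra | lra |].
  intros y Hy0 Hy1. symmetry. apply glue_in. lra.
Qed.

Section GlueContinuity.

Variables (g : R -> R) (a0 b0 : R).
Hypothesis Hg : forall t, 0 < t < 1 -> continuous g t.
Hypothesis Hg0 : filterlim g (at_right 0) (locally a0).
Hypothesis Hg1 : filterlim g (at_left 1) (locally b0).

Lemma continuity_pt_glue (x : R) : I01 x -> continuity_pt (glue g a0 b0) x.
Proof.
  unfold I01. intros Hx. apply continuity_pt_filterlim.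
  destruct (Req_dec x 0) as [->|Hx0]; [|destruct (Req_dec x 1) as [->|Hx1]].
  - rewrite glue_le0 by lra. intros P HP. unfold filtermap.
    apply (filter_imp (fun y => (0 < y -> P (g y)) /\ y < 1)).
    + intros y [Hy Hy1]. destruct (Rle_lt_dec y 0).
      * rewrite glue_le0 by easy. now apply locally_singleton.
      * rewrite glue_in by lra. now apply Hy.
    + apply filter_and; [exact (Hg0 P HP) | now apply open_lt; lra].
  - rewrite glue_ge1 by lra. intros P HP. unfold filtermap.
    apply (filter_imp (fun y => (y < 1 -> P (g y)) /\ 0 < y)).
    + intros y [Hy Hy0]. destruct (Rle_lt_dec 1 y).
      * rewrite glue_ge1 by easy. now apply locally_singleton.
      * rewrite glue_in by lra. now apply Hy.
    + apply filter_and; [exact (Hg1 P HP) | now apply open_gt; lra].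
  - apply (continuous_ext_loc _ g); [now apply locally_glue_in; lra|].
    apply Hg. lra.
Qed.

Lemma cont_within01_glue (x : R) : I01 x -> cont_within01 (glue g a0 b0) x.
Proof.
  intros Hx. apply (filterlim_filter_le_1 _ (filter_le_within _)).
  now apply continuity_pt_filterlim, continuity_pt_glue.
Qed.

End GlueContinuity.

Section GlueDerivative.

Variables (g g' : R -> R) (a0 a1 b0 b1 : R).
Hypothesis Hd : forall t, 0 < t < 1 -> is_derive g t (g' t).
Hypothesis Hg0 : filterlim g (at_right 0) (locally a0).
Hypothesis Hd0 : filterlim g' (at_right 0) (locally a1).
Hypothesis Hg1 : filterlim g (at_left 1) (locally b0).
Hypothesis Hd1 : filterlim g' (at_left 1) (locally b1).

Lemma is_derive_glue (t : R) : 0 < t < 1 -> is_derive (glue g a0 b0) t (glue g' a1 b1 t).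
Proof.
  intros Ht. rewrite glue_in by exact Ht.
  apply (is_derive_ext_loc g); [now apply locally_glue_in | now apply Hd].
Qed.

Lemma continuity_pt_glue_of_is_derive (t : R) : I01 t -> continuity_pt (glue g a0 b0) t.
Proof.
  apply continuity_pt_glue; [|exact Hg0 | exact Hg1].
  intros t' Ht'. exact (continuous_of_is_derive _ _ _ (Hd t' Ht')).
Qed.

(* At an endpoint, the mean value theorem on [0, y] (or [y, 1]) reduces the slope to a
   value of g' near that endpoint. *)
Lemma deriv_within01_glue_0 : deriv_within01 (glue g a0 b0) 0 a1.
Proof.
  apply filterlim_locally. intros eps.
  destruct (proj1 (filterlim_locally _ _) Hd0 eps) as [d Hdd].
  exists (mkposreal _ (Rmin_pos _ _ (cond_pos d) Rlt_0_1)). simpl. intros y Hy [Hy01 Hy0].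
  change (Rabs (y - 0) < Rmin d 1) in Hy. unfold I01 in Hy01.
  rewrite Rminus_0_r, Rabs_pos_eq in Hy by lra.
  pose proof (Rmin_l d 1). pose proof (Rmin_r d 1).
  apply (mvt_slope_bound _ (glue g' a1 b1)); [lra | intros t Ht; apply is_derive_glue; lra
    | intros t Ht; apply continuity_pt_glue_of_is_derive; unfold I01; lra |].
  intros t Ht. destruct (Req_dec t 0) as [->|Ht0].
  - rewrite glue_le0, Rminus_eq_0, Rabs_R0 by lra. apply cond_pos.
  - rewrite glue_in by lra. apply (Hdd t); [|lra].
    change (Rabs (t - 0) < d). rewrite Rminus_0_r, Rabs_pos_eq; lra.
Qed.

Lemma deriv_within01_glue_1 : deriv_within01 (glue g a0 b0) 1 b1.
Proof.
  apply filterlim_locally. intros eps.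
  destruct (proj1 (filterlim_locally _ _) Hd1 eps) as [d Hdd].
  exists (mkposreal _ (Rmin_pos _ _ (cond_pos d) Rlt_0_1)). simpl. intros y Hy [Hy01 Hy1].
  change (Rabs (y - 1) < Rmin d 1) in Hy. unfold I01 in Hy01.
  rewrite Rabs_left in Hy by lra.
  pose proof (Rmin_l d 1). pose proof (Rmin_r d 1).
  change (Rabs (slope (glue g a0 b0) 1 y - b1) < eps).
  replace (slope (glue g a0 b0) 1 y) with ((glue g a0 b0 1 - glue g a0 b0 y) / (1 - y))
    by (unfold slope; field; lra).
  apply (mvt_slope_bound _ (glue g' a1 b1)); [lra | intros t Ht; apply is_derive_glue; lra
    | intros t Ht; apply continuity_pt_glue_of_is_derive; unfold I01; lra |].
  intros t Ht. destruct (Req_dec t 1) as [->|Ht1].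
  - rewrite glue_ge1, Rminus_eq_0, Rabs_R0 by lra. apply cond_pos.
  - rewrite glue_in by lra. apply (Hdd t); [|lra].
    change (Rabs (t - 1) < d). rewrite Rabs_left; lra.
Qed.

Lemma deriv_within01_glue (x : R) : I01 x -> deriv_within01 (glue g a0 b0) x (glue g' a1 b1 x).
Proof.
  unfold I01. intros Hx.
  destruct (Req_dec x 0) as [->|Hx0]; [|destruct (Req_dec x 1) as [->|Hx1]].
  - rewrite glue_le0 by lra. exact deriv_within01_glue_0.
  - rewrite glue_ge1 by lra. exact deriv_within01_glue_1.
  - apply slope_within_of_is_derive, is_derive_glue. lra.
Qed.

End GlueDerivative.

(** * The kernel *)

Lemma exp_ge_half_sq (z : R) : 0 <= z -> (z / 2) ^ 2 <= exp z.
Proof.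
  intros Hz. replace (exp z) with (exp (z / 2) ^ 2)
    by (simpl; rewrite Rmult_1_r, <- exp_plus; f_equal; field).
  apply pow_incr. pose proof (exp_ineq1_le (z / 2)). lra.
Qed.

Lemma exp_ge_quarter_pow4 (z : R) : 0 <= z -> (z / 4) ^ 4 <= exp z.
Proof.
  intros Hz. replace ((z / 4) ^ 4) with (((z / 2 / 2) ^ 2) ^ 2) by field.
  replace (exp z) with (exp (z / 2) ^ 2)
    by (simpl; rewrite Rmult_1_r, <- exp_plus; f_equal; field).
  apply pow_incr. split; [apply pow_le; lra | apply exp_ge_half_sq; lra].
Qed.

Section Kernel.

Variable lam : R.
Hypothesis Hlam : 0 < lam.

Definition kern (x : R) : R :=
  if Rlt_dec x 1 then / (1 - x) ^ 2 * exp (- lam / (1 - x)) else 0.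

Definition kexp (x : R) : R := if Rlt_dec x 1 then exp (- lam / (1 - x)) else 0.

Lemma kern_ge0 (x : R) : 0 <= kern x.
Proof.
  unfold kern. destruct (Rlt_dec x 1); [|lra].
  apply Rmult_le_pos; [apply Rlt_le, Rinv_0_lt_compat, pow_lt; lra | apply Rlt_le, exp_pos].
Qed.

Lemma kexp_kern (x : R) : kexp x = (1 - x) ^ 2 * kern x.
Proof. unfold kexp, kern. destruct (Rlt_dec x 1); [field; lra | ring]. Qed.

Lemma rho_kern (x : R) : rho lam x = lam * exp lam * kern x.
Proof.
  unfold rho, kern. destruct (Rlt_dec x 1); [|ring].
  replace (- (lam * x / (1 - x))) with (lam + - lam / (1 - x)) by (field; lra).
  rewrite exp_plus. field. lra.
Qed.

(* Both bounds come from exp z >= (z/n)^n with z = lam/(1-x). *)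
Lemma kern_le (x : R) : kern x <= 256 / lam ^ 4 * (x - 1) ^ 2.
Proof.
  unfold kern. destruct (Rlt_dec x 1) as [Hx|Hx]; [|apply Rmult_le_pos; [|apply pow2_ge_0]].
  - assert (Hz := exp_ge_quarter_pow4 (lam / (1 - x)) ltac:(apply Rlt_le, Rdiv_lt_0_compat; lra)).
    assert (Hq : 0 < (lam / (1 - x) / 4) ^ 4)
      by (apply pow_lt, Rdiv_lt_0_compat; [apply Rdiv_lt_0_compat|]; lra).
    replace (- lam / (1 - x)) with (- (lam / (1 - x))) by (field; lra).
    rewrite exp_Ropp.
    apply Rinv_le_contravar in Hz; [|exact Hq].
    apply (Rle_trans _ (/ (1 - x) ^ 2 * / (lam / (1 - x) / 4) ^ 4)).
    + apply Rmult_le_compat_l; [apply Rlt_le, Rinv_0_lt_compat, pow_lt; lra | exact Hz].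
    + right. field. lra.
  - apply Rlt_le, Rdiv_lt_0_compat, pow_lt; lra.
Qed.

Lemma kexp_le (x : R) : kexp x <= 4 / lam ^ 2 * (x - 1) ^ 2.
Proof.
  unfold kexp. destruct (Rlt_dec x 1) as [Hx|Hx]; [|apply Rmult_le_pos; [|apply pow2_ge_0]].
  - assert (Hz := exp_ge_half_sq (lam / (1 - x)) ltac:(apply Rlt_le, Rdiv_lt_0_compat; lra)).
    assert (Hq : 0 < (lam / (1 - x) / 2) ^ 2)
      by (apply pow_lt, Rdiv_lt_0_compat; [apply Rdiv_lt_0_compat|]; lra).
    replace (- lam / (1 - x)) with (- (lam / (1 - x))) by (field; lra).
    rewrite exp_Ropp.
    apply Rinv_le_contravar in Hz; [|exact Hq].
    eapply Rle_trans; [exact Hz | right; field; lra].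
  - apply Rlt_le, Rdiv_lt_0_compat, pow_lt; lra.
Qed.

Lemma is_derive_kern_1 : is_derive kern 1 0.
Proof.
  apply (is_derive_of_quadratic_bound _ _ _ (256 / lam ^ 4)). intros y.
  assert (H1 : kern 1 = 0) by (unfold kern; destruct (Rlt_dec 1 1); lra).
  rewrite H1, Rmult_0_l, !Rminus_0_r, Rabs_pos_eq by apply kern_ge0.
  apply kern_le.
Qed.

Lemma ex_derive_kern (x : R) : ex_derive kern x.
Proof.
  destruct (Rlt_le_dec x 1) as [Hx|Hx]; [|destruct (Req_dec x 1) as [->|Hx1]].
  - apply (ex_derive_ext_loc (fun y => / (1 - y) ^ 2 * exp (- lam / (1 - y)))).
    + apply (filter_imp (fun y => y < 1)); [|now apply open_lt].
      intros y Hy. unfold kern. now destruct (Rlt_dec y 1).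
    + auto_derive. repeat split; intro; nra.
  - now exists 0; apply is_derive_kern_1.
  - apply (ex_derive_ext_loc (fun _ => 0)).
    + apply (filter_imp (fun y => 1 < y)); [|apply open_gt; lra].
      intros y Hy. unfold kern. destruct (Rlt_dec y 1); [lra|easy].
    + apply ex_derive_const.
Qed.

Lemma continuous_kern (x : R) : continuous kern x.
Proof. apply (ex_derive_continuous (V := R_NormedModule)), ex_derive_kern. Qed.

Lemma is_derive_kexp (x : R) : is_derive kexp x (- lam * kern x).
Proof.
  destruct (Rlt_le_dec x 1) as [Hx|Hx]; [|destruct (Req_dec x 1) as [->|Hx1]].
  - apply (is_derive_ext_loc (fun y => exp (- lam / (1 - y)))).
    + apply (filter_imp (fun y => y < 1)); [|now apply open_lt].
      intros y Hy. unfold kexp. now destruct (Rlt_dec y 1).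
    + unfold kern. destruct (Rlt_dec x 1); [|lra].
      auto_derive; [lra|]. unfold Rdiv, Rminus. field. lra.
  - assert (H1 : kern 1 = 0) by (unfold kern; destruct (Rlt_dec 1 1); lra).
    rewrite H1, Rmult_0_r.
    apply (is_derive_of_quadratic_bound _ _ _ (4 / lam ^ 2)). intros y.
    assert (H1' : kexp 1 = 0) by (unfold kexp; destruct (Rlt_dec 1 1); lra).
    rewrite H1', Rmult_0_l, !Rminus_0_r, Rabs_pos_eq
      by (rewrite kexp_kern; apply Rmult_le_pos; [apply pow2_ge_0 | apply kern_ge0]).
    apply kexp_le.
  - assert (H0 : kern x = 0) by (unfold kern; destruct (Rlt_dec x 1); lra).
    rewrite H0, Rmult_0_r.
    apply (is_derive_ext_loc (fun _ => 0)); [|exact (is_derive_const 0 x)].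
    apply (filter_imp (fun y => 1 < y)); [|apply open_gt; lra].
    intros y Hy. unfold kexp. destruct (Rlt_dec y 1); [lra|easy].
Qed.

End Kernel.

(** * The tail operator *)

Section Tail.

Variable lam : R.
Hypothesis Hlam : 0 < lam.

Definition tail (g : R -> R) (s : R) : R :=
  exp (lam / (1 - s)) * RInt (fun x => g x * kern lam x) s 1.

Lemma continuous_mul_kern (g : R -> R) (x : R) :
  continuous g x -> continuous (fun y => g y * kern lam y) x.
Proof. intros Hg. apply (continuous_mult g (kern lam)); [exact Hg | now apply continuous_kern]. Qed.

Lemma ex_RInt_mul_kern (g : R -> R) (a b : R) :
  (forall x, continuous g x) -> ex_RInt (fun x => g x * kern lam x) a b.
Proof.
  intros Hg. apply (ex_RInt_continuous (V := R_CompleteNormedModule)).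
  intros z _. now apply continuous_mul_kern.
Qed.

Lemma tail_ext (f g : R -> R) (s : R) :
  s < 1 -> (forall x, s < x < 1 -> f x = g x) -> tail f s = tail g s.
Proof.
  intros Hs Hfg. unfold tail. f_equal. apply RInt_ext.
  rewrite Rmin_left, Rmax_right by lra. intros x Hx. now rewrite Hfg.
Qed.

Lemma tail_lincomb (a b : R) (f g : R -> R) (s : R) :
  (forall x, continuous f x) -> (forall x, continuous g x) ->
  tail (fun x => a * f x + b * g x) s = a * tail f s + b * tail g s.
Proof.
  intros Hf Hg. unfold tail.
  rewrite (RInt_ext (V := R_CompleteNormedModule) _
    (fun x => a * (f x * kern lam x) + b * (g x * kern lam x))).
  - rewrite RInt_lincomb by now apply ex_RInt_mul_kern.
    set (I := RInt (fun x => f x * kern lam x) s 1).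
    set (J := RInt (fun x => g x * kern lam x) s 1). ring.
  - intros x _. simpl. ring.
Qed.

Lemma tail_ge0 (g : R -> R) (s : R) :
  s < 1 -> (forall x, continuous g x) -> (forall x, s <= x <= 1 -> 0 <= g x) -> 0 <= tail g s.
Proof.
  intros Hs Hc Hg. unfold tail.
  apply Rmult_le_pos; [apply Rlt_le, exp_pos|].
  apply RInt_ge_0; [lra | now apply ex_RInt_mul_kern|].
  intros x Hx. apply Rmult_le_pos; [apply Hg; lra | apply kern_ge0].
Qed.

(* Integration by parts against kexp, whose derivative is - lam * kern. *)
Lemma RInt_ibp_kern (g g' : R -> R) (s : R) :
  s < 1 -> (forall x, is_derive g x (g' x)) -> (forall x, continuous g' x) ->
  RInt (fun x => (1 - x) ^ 2 * g' x * kern lam x) s 1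
  = lam * RInt (fun x => g x * kern lam x) s 1 - g s * exp (- lam / (1 - s)) :> R.
Proof.
  intros Hs Hd Hc.
  assert (Hgc : forall x, continuous g x) by (intros x; exact (continuous_of_is_derive _ _ _ (Hd x))).
  assert (Hint := is_RInt_derive (fun x => g x * kexp lam x)
    (fun x => g' x * kexp lam x + g x * (- lam * kern lam x)) s 1).
  apply is_RInt_unique in Hint.
  2: { intros x _. apply Derive.is_derive_mult; [apply Hd | now apply is_derive_kexp]. }
  2: { intros x _.
       apply (continuous_plus (fun x => g' x * kexp lam x) (fun x => g x * (- lam * kern lam x))).
       - apply (continuous_mult g' (kexp lam)); [apply Hc|].
         exact (continuous_of_is_derive _ _ _ (is_derive_kexp lam Hlam x)).
       - apply (continuous_mult g (fun x => - lam * kern lam x)); [apply Hgc|].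
         apply (continuous_scal_r (- lam) (kern lam)). now apply continuous_kern. }
  rewrite (RInt_ext (V := R_CompleteNormedModule) _
    (fun x => 1 * ((1 - x) ^ 2 * g' x * kern lam x) + (- lam) * (g x * kern lam x)))
    in Hint by (intros; rewrite kexp_kern; simpl; ring).
  rewrite RInt_lincomb in Hint.
  2: { apply ex_RInt_mul_kern. intros x.
       apply (continuous_mult (fun x => (1 - x) ^ 2) g'); [apply continuous_pow_1m | apply Hc]. }
  2: { now apply ex_RInt_mul_kern. }
  assert (Hk1 : kexp lam 1 = 0) by (unfold kexp; destruct (Rlt_dec 1 1); [lra | reflexivity]).
  assert (Hks : kexp lam s = exp (- lam / (1 - s)))
    by (unfold kexp; destruct (Rlt_dec s 1); [reflexivity | lra]).
  rewrite Hk1, Hks in Hint. change (minus ?a ?b) with (a - b) in Hint. lra.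
Qed.

Lemma tail_ibp (g g' : R -> R) (s : R) :
  s < 1 -> (forall x, is_derive g x (g' x)) -> (forall x, continuous g' x) ->
  lam * tail g s = g s + tail (fun x => (1 - x) ^ 2 * g' x) s.
Proof.
  intros Hs Hd Hc. unfold tail.
  rewrite (RInt_ibp_kern g g' s Hs Hd Hc).
  set (I0 := RInt (fun x => g x * kern lam x) s 1).
  replace (g s) with (g s * (exp (lam / (1 - s)) * exp (- lam / (1 - s)))) at 1
    by (rewrite exp_mul_exp_opp_div; ring).
  ring.
Qed.

Lemma tail_one (s : R) : s < 1 -> lam * tail (fun _ => 1) s = 1.
Proof.
  intros Hs.
  rewrite (tail_ibp (fun _ => 1) (fun _ => 0));
    [| exact Hs | intros x; exact (is_derive_const 1 x) | intros; apply continuous_const].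
  rewrite (tail_ext _ (fun x => 0 * 1 + 0 * 1)) by (easy || intros; ring).
  rewrite tail_lincomb by (intros; apply continuous_const). ring.
Qed.

Lemma tail_abs_le (g : R -> R) (s M : R) :
  s < 1 -> (forall x, continuous g x) -> (forall x, s <= x <= 1 -> Rabs (g x) <= M) ->
  Rabs (tail g s) <= M / lam.
Proof.
  intros Hs Hc Hg.
  assert (H1 : tail (fun _ => 1) s = / lam).
  { apply (Rmult_eq_reg_l lam); [|lra]. rewrite tail_one by exact Hs. field. lra. }
  assert (Hcomb : forall c, 0 <= tail (fun x => M * 1 + c * g x) s -> 0 <= M / lam + c * tail g s).
  { intros c Hcs. rewrite tail_lincomb in Hcs by (easy || intros; apply continuous_const).
    rewrite H1 in Hcs. unfold Rdiv. lra. }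
  apply Rabs_le. split.
  - enough (0 <= M / lam + 1 * tail g s) by lra.
    apply Hcomb, tail_ge0; [exact Hs| |].
    + intros x. apply (continuous_plus (fun _ => M * 1) (fun x => 1 * g x)); [apply continuous_const|].
      apply (continuous_scal_r 1 g), Hc.
    + intros x Hx. specialize (Hg x Hx). apply Rabs_le_between in Hg. lra.
  - enough (0 <= M / lam + -1 * tail g s) by lra.
    apply Hcomb, tail_ge0; [exact Hs| |].
    + intros x. apply (continuous_plus (fun _ => M * 1) (fun x => -1 * g x)); [apply continuous_const|].
      apply (continuous_scal_r (-1) g), Hc.
    + intros x Hx. specialize (Hg x Hx). apply Rabs_le_between in Hg. lra.
Qed.

Definition tailn (n : nat) (g : R -> R) (s : R) : R :=
  tail (fun x => (1 - x) ^ n * g x) s / (1 - s) ^ n.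

Lemma continuous_pow_1m_mul (n : nat) (g : R -> R) (x : R) :
  continuous g x -> continuous (fun y => (1 - y) ^ n * g y) x.
Proof. intros Hg. apply (continuous_mult (fun y => (1 - y) ^ n) g); [apply continuous_pow_1m | exact Hg]. Qed.

Lemma tailn_ext (n : nat) (f g : R -> R) (s : R) :
  s < 1 -> (forall x, s < x < 1 -> f x = g x) -> tailn n f s = tailn n g s.
Proof. intros Hs Hfg. unfold tailn. f_equal. apply tail_ext; [exact Hs|]. intros. now rewrite Hfg. Qed.

Lemma tailn_lincomb (n : nat) (a b : R) (f g : R -> R) (s : R) :
  s < 1 -> (forall x, continuous f x) -> (forall x, continuous g x) ->
  tailn n (fun x => a * f x + b * g x) s = a * tailn n f s + b * tailn n g s.
Proof.
  intros Hs Hf Hg. unfold tailn.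
  rewrite (tail_ext _ (fun x => a * ((1 - x) ^ n * f x) + b * ((1 - x) ^ n * g x)))
    by (easy || intros; ring).
  rewrite tail_lincomb by (intros; now apply continuous_pow_1m_mul).
  field. apply pow_nonzero. lra.
Qed.

Lemma tailn_shift (n : nat) (g : R -> R) (s : R) :
  s < 1 -> tailn n (fun x => (1 - x) * g x) s = (1 - s) * tailn (S n) g s.
Proof.
  intros Hs. unfold tailn.
  rewrite (tail_ext _ (fun x => (1 - x) ^ S n * g x)) by (easy || intros; simpl; ring).
  simpl. field. split; [apply pow_nonzero|]; lra.
Qed.

Lemma tailn_abs_le (n : nat) (g : R -> R) (s M : R) :
  s < 1 -> (forall x, continuous g x) -> (forall x, s <= x <= 1 -> Rabs (g x) <= M) ->
  Rabs (tailn n g s) <= M / lam.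
Proof.
  intros Hs Hc Hg.
  assert (Hp : 0 < (1 - s) ^ n) by (apply pow_lt; lra).
  unfold tailn. rewrite Rabs_div, (Rabs_pos_eq ((1 - s) ^ n)) by lra.
  apply (Rmult_le_reg_r ((1 - s) ^ n)); [exact Hp|].
  unfold Rdiv at 1. rewrite Rmult_assoc, Rinv_l, Rmult_1_r by lra.
  replace (M / lam * (1 - s) ^ n) with ((1 - s) ^ n * M / lam) by (field; lra).
  apply tail_abs_le; [exact Hs | intros; now apply continuous_pow_1m_mul |].
  intros x Hx. rewrite Rabs_mult, (Rabs_pos_eq ((1 - x) ^ n)) by (apply pow_le; lra).
  apply Rmult_le_compat; [apply pow_le; lra | apply Rabs_pos | apply pow_incr; lra | now apply Hg].
Qed.

Lemma tailn_ibp (n : nat) (g g' : R -> R) (s : R) :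
  s < 1 -> (forall x, is_derive g x (g' x)) -> (forall x, continuous g' x) ->
  lam * tailn n g s = g s + (1 - s) * tailn (S n) (fun x => (1 - x) * g' x - INR n * g x) s.
Proof.
  intros Hs Hd Hc.
  assert (Hgc : forall x, continuous g x)
    by (intros x; exact (continuous_of_is_derive _ _ _ (Hd x))).
  assert (Hp : (1 - s) ^ n <> 0) by (apply pow_nonzero; lra).
  unfold tailn. unfold Rdiv at 1. rewrite <- Rmult_assoc.
  rewrite (tail_ibp _ (fun x => - INR n * (1 - x) ^ pred n * g x + (1 - x) ^ n * g' x)).
  - rewrite (tail_ext (fun x => (1 - x) ^ 2 * _)
      (fun x => (1 - x) ^ S n * ((1 - x) * g' x - INR n * g x))) by
      (easy || intros x _; destruct n; simpl; ring).
    simpl. field. split; [exact Hp | lra].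
  - exact Hs.
  - intros x. apply Derive.is_derive_mult; [apply is_derive_pow_1m | apply Hd].
  - intros x.
    apply (continuous_plus (fun x => - INR n * (1 - x) ^ pred n * g x) (fun x => (1 - x) ^ n * g' x)).
    + apply (continuous_mult (fun x => - INR n * (1 - x) ^ pred n) g); [|apply Hgc].
      apply (continuous_scal_r (- INR n) (fun x => (1 - x) ^ pred n)), continuous_pow_1m.
    + now apply continuous_pow_1m_mul.
Qed.

Lemma tailn_near (n : nat) (g : R -> R) (s eta : R) :
  s < 1 -> (forall x, continuous g x) -> (forall x, s <= x <= 1 -> Rabs (g x - g 1) <= eta) ->
  Rabs (tailn n g s - g 1 / lam) <= eta / lam + Rabs (g 1) * INR n * (1 - s) / lam ^ 2.
Proof.
  intros Hs Hc Hg.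
  set (T := tailn (S n) (fun x => (1 - x) * 0 - INR n * 1) s).
  assert (Hone : lam * tailn n (fun _ => 1) s = 1 + (1 - s) * T).
  { apply tailn_ibp; [exact Hs | intros x | intros; apply continuous_const].
    exact (is_derive_const 1 x). }
  assert (HT : Rabs T <= INR n / lam).
  { apply tailn_abs_le; [exact Hs | |].
    - intros x. apply (continuous_ext (fun _ => - INR n)); [intros; simpl; ring | apply continuous_const].
    - intros x _. rewrite Rmult_0_r, Rminus_0_l, Rmult_1_r, Rabs_Ropp, Rabs_pos_eq by apply pos_INR.
      lra. }
  assert (Hdev : Rabs (tailn n (fun x => g x - g 1) s) <= eta / lam).
  { apply tailn_abs_le; [exact Hs | | exact Hg].
    intros x. apply (continuous_minus g (fun _ => g 1)); [apply Hc | apply continuous_const]. }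
  rewrite (tailn_ext n g (fun x => 1 * (g x - g 1) + g 1 * 1)) by (easy || intros; ring).
  rewrite tailn_lincomb; [| exact Hs | | intros; apply continuous_const].
  2: { intros x. apply (continuous_minus g (fun _ => g 1)); [apply Hc | apply continuous_const]. }
  replace (1 * tailn n (fun x => g x - g 1) s + g 1 * tailn n (fun _ => 1) s - g 1 / lam)
    with (tailn n (fun x => g x - g 1) s + g 1 * ((1 - s) / lam) * T)
    by (replace (tailn n (fun _ => 1) s) with ((1 + (1 - s) * T) / lam)
          by (rewrite <- Hone; field; lra); field; lra).
  eapply Rle_trans; [apply Rabs_triang | apply Rplus_le_compat; [exact Hdev|]].
  rewrite !Rabs_mult, (Rabs_pos_eq ((1 - s) / lam)) by (apply Rlt_le, Rdiv_lt_0_compat; lra).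
  replace (Rabs (g 1) * INR n * (1 - s) / lam ^ 2)
    with (Rabs (g 1) * ((1 - s) / lam) * (INR n / lam)) by (field; lra).
  apply Rmult_le_compat_l; [|exact HT].
  apply Rmult_le_pos; [apply Rabs_pos | apply Rlt_le, Rdiv_lt_0_compat; lra].
Qed.

Lemma tailn_lim (n : nat) (g : R -> R) :
  (forall x, continuous g x) -> filterlim (tailn n g) (at_left 1) (locally (g 1 / lam)).
Proof.
  intros Hc. apply filterlim_locally. intros eps.
  assert (Heps := cond_pos eps).
  assert (Hlam2 : 0 < lam ^ 2) by (apply pow_lt; lra).
  assert (Heta : 0 < eps * lam / 2) by nra.
  destruct (proj1 (filterlim_locally _ _) (Hc 1) (mkposreal _ Heta)) as [d1 Hd1].
  set (K := Rabs (g 1) * INR n + 1).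
  assert (HK : 0 < K) by (unfold K; pose proof (Rabs_pos (g 1)); pose proof (pos_INR n); nra).
  assert (Hd2 : 0 < eps * lam ^ 2 / (2 * K)) by (apply Rdiv_lt_0_compat; nra).
  exists (mkposreal _ (Rmin_pos _ _ (cond_pos d1) Hd2)). simpl. intros s Hs Hs1.
  change (Rabs (s - 1) < Rmin d1 (eps * lam ^ 2 / (2 * K))) in Hs.
  rewrite Rabs_left in Hs by lra.
  pose proof (Rmin_l d1 (eps * lam ^ 2 / (2 * K))). pose proof (Rmin_r d1 (eps * lam ^ 2 / (2 * K))).
  change (Rabs (tailn n g s - g 1 / lam) < eps).
  eapply Rle_lt_trans; [apply (tailn_near n g s (eps * lam / 2)); [exact Hs1 | exact Hc |]|].
  - intros x Hx. apply Rlt_le, (Hd1 x). change (Rabs (x - 1) < d1).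
    rewrite Rabs_left1 by lra. lra.
  - assert (HKs : K * (1 - s) < eps * lam ^ 2 / 2).
    { replace (eps * lam ^ 2 / 2) with (K * (eps * lam ^ 2 / (2 * K))) by (field; lra).
      apply Rmult_lt_compat_l; lra. }
    assert (Hg1 : Rabs (g 1) * INR n * (1 - s) <= K * (1 - s))
      by (apply Rmult_le_compat_r; unfold K; lra).
    assert (Hsecond : Rabs (g 1) * INR n * (1 - s) / lam ^ 2 < eps / 2).
    { apply (Rmult_lt_reg_r (lam ^ 2)); [exact Hlam2|].
      unfold Rdiv. rewrite Rmult_assoc, Rinv_l, Rmult_1_r by lra. lra. }
    replace (eps * lam / 2 / lam) with (eps / 2) by (field; lra). lra.
Qed.

Lemma tailn_step_lim (n : nat) (g g' : R -> R) :
  (forall x, is_derive g x (g' x)) -> (forall x, continuous g' x) ->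
  filterlim (fun s => (tailn n g s - tailn (S n) g s) / (1 - s)) (at_left 1)
    (locally (g 1 / lam ^ 2)).
Proof.
  intros Hd Hc.
  set (D := fun (m : nat) x => (1 - x) * g' x - INR m * g x).
  assert (HD : forall m x, continuous (D m) x).
  { intros m x. apply (continuous_minus (fun x => (1 - x) * g' x) (fun x => INR m * g x)).
    - apply (continuous_mult (fun x => 1 - x) g'); [|apply Hc].
      apply (continuous_ext (fun x => (1 - x) ^ 1)); [intros; simpl; ring | apply continuous_pow_1m].
    - apply (continuous_scal_r (INR m) g).
      exact (continuous_of_is_derive _ _ _ (Hd x)). }
  apply (filterlim_ext_loc (fun s => (tailn (S n) (D n) s - tailn (S (S n)) (D (S n)) s) * / lam)).
  - unfold at_left, within. apply filter_forall. intros s Hs.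
    assert (H0 := tailn_ibp n g g' s Hs Hd Hc).
    assert (H1 := tailn_ibp (S n) g g' s Hs Hd Hc).
    fold (D n) in H0. fold (D (S n)) in H1.
    apply (Rmult_eq_reg_l (lam * (1 - s))); [|nra].
    field_simplify; [|lra..]. rewrite H0, H1. ring.
  - replace (g 1 / lam ^ 2) with ((D n 1 / lam - D (S n) 1 / lam) * / lam)
      by (unfold D; rewrite S_INR; field; lra).
    apply filterlim_Rmult; [apply filterlim_Rminus; apply tailn_lim, HD | apply filterlim_const].
Qed.

End Tail.

(** * The solution of the ODE *)

Section Solution.

Variable lam : R.
Hypothesis Hlam : 0 < lam.
Variables u u1 u2 : R -> R.
Hypothesis Hu : forall x, is_derive u x (u1 x).
Hypothesis Hu1 : forall x, is_derive u1 x (u2 x).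
Hypothesis Hu2 : forall x, continuous u2 x.

Lemma continuous_u (x : R) : continuous u x.
Proof. exact (continuous_of_is_derive _ _ _ (Hu x)). Qed.

Lemma continuous_u1 (x : R) : continuous u1 x.
Proof. exact (continuous_of_is_derive _ _ _ (Hu1 x)). Qed.

(* [v s = s * G s] solves [v' = (lam v + u) / (1 - s)^2] on s < 1; differentiating
   this equation gives the next derivatives [v1], [v2], [v3]. *)
Definition v (s : R) : R := exp (lam / (1 - s)) * RInt (fun x => u x * kern lam x) 0 s.
Definition v1 (s : R) : R := (/ (1 - s)) ^ 2 * (lam * v s + u s).
Definition v2 (s : R) : R :=
  2 * ((/ (1 - s)) ^ 3 * (lam * v s + u s)) + (/ (1 - s)) ^ 2 * (lam * v1 s + u1 s).
Definition v3 (s : R) : R :=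
  6 * ((/ (1 - s)) ^ 4 * (lam * v s + u s)) + 4 * ((/ (1 - s)) ^ 3 * (lam * v1 s + u1 s))
  + (/ (1 - s)) ^ 2 * (lam * v2 s + u2 s).

Lemma is_derive_v (s : R) : s < 1 -> is_derive v s (v1 s).
Proof.
  intros Hs.
  assert (Hexp : is_derive (fun t => exp (lam / (1 - t))) s
                   (lam * (/ (1 - s)) ^ 2 * exp (lam / (1 - s))))
    by (auto_derive; [lra | unfold Rdiv, Rminus; field; lra]).
  assert (Hprim : is_derive (fun t => RInt (fun x => u x * kern lam x) 0 t) s (u s * kern lam s)).
  { apply (is_derive_RInt (fun x => u x * kern lam x) _ 0 s).
    - apply filter_forall. intros t. apply (RInt_correct (V := R_CompleteNormedModule)).
      apply ex_RInt_mul_kern; [exact Hlam | exact continuous_u].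
    - apply continuous_mul_kern; [exact Hlam | apply continuous_u]. }
  apply (is_derive_eq _ _ _ _ (Derive.is_derive_mult _ _ _ _ _ Hexp Hprim)).
  unfold v1, v, kern. destruct (Rlt_dec s 1); [|lra].
  replace (exp (lam / (1 - s)) * (u s * (/ (1 - s) ^ 2 * exp (- lam / (1 - s)))))
    with (u s * / (1 - s) ^ 2 * (exp (lam / (1 - s)) * exp (- lam / (1 - s)))) by ring.
  rewrite exp_mul_exp_opp_div. field. lra.
Qed.

Lemma is_derive_lam_v_u (s : R) : s < 1 -> is_derive (fun t => lam * v t + u t) s (lam * v1 s + u1 s).
Proof. intros Hs. apply is_derive_Rplus; [apply is_derive_scal, is_derive_v, Hs | apply Hu]. Qed.

Lemma is_derive_v1 (s : R) : s < 1 -> is_derive v1 s (v2 s).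
Proof.
  intros Hs. apply (is_derive_eq _ _ _ _ (is_derive_inv1m_pow_mul 2 _ _ _ Hs (is_derive_lam_v_u s Hs))).
  unfold v2. simpl. ring.
Qed.

Lemma is_derive_lam_v1_u1 (s : R) : s < 1 -> is_derive (fun t => lam * v1 t + u1 t) s (lam * v2 s + u2 s).
Proof. intros Hs. apply is_derive_Rplus; [apply is_derive_scal, is_derive_v1, Hs | apply Hu1]. Qed.

Lemma is_derive_v2 (s : R) : s < 1 -> is_derive v2 s (v3 s).
Proof.
  intros Hs. apply (is_derive_eq _ _ _ _ (is_derive_Rplus _ _ _ _ _
    (is_derive_scal _ _ 2 _ (is_derive_inv1m_pow_mul 3 _ _ _ Hs (is_derive_lam_v_u s Hs)))
    (is_derive_inv1m_pow_mul 2 _ _ _ Hs (is_derive_lam_v1_u1 s Hs)))).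
  unfold v3. simpl. ring.
Qed.

Lemma continuous_v3 (s : R) : s < 1 -> continuous v3 s.
Proof.
  intros Hs.
  assert (Hp : forall k W, continuous W s -> continuous (fun t => (/ (1 - t)) ^ k * W t) s).
  { intros k W HW. apply (continuous_mult (fun t => (/ (1 - t)) ^ k) W); [|exact HW].
    exact (continuous_of_is_derive _ _ _ (is_derive_inv1m_pow k s Hs)). }
  assert (H0 := continuous_of_is_derive _ _ _ (is_derive_lam_v_u s Hs)).
  assert (H1 := continuous_of_is_derive _ _ _ (is_derive_lam_v1_u1 s Hs)).
  assert (H2 : continuous (fun t => lam * v2 t + u2 t) s).
  { apply (continuous_plus (fun t => lam * v2 t) u2); [|apply Hu2].
    apply (continuous_scal_r lam v2), (continuous_of_is_derive _ _ _ (is_derive_v2 s Hs)). }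
  unfold v3.
  apply (continuous_plus (fun t => 6 * ((/ (1 - t)) ^ 4 * (lam * v t + u t))
                                 + 4 * ((/ (1 - t)) ^ 3 * (lam * v1 t + u1 t)))
                         (fun t => (/ (1 - t)) ^ 2 * (lam * v2 t + u2 t))); [|now apply Hp].
  apply (continuous_plus (fun t => 6 * ((/ (1 - t)) ^ 4 * (lam * v t + u t)))
                         (fun t => 4 * ((/ (1 - t)) ^ 3 * (lam * v1 t + u1 t)))).
  - apply (continuous_scal_r 6 (fun t => (/ (1 - t)) ^ 4 * (lam * v t + u t))). now apply Hp.
  - apply (continuous_scal_r 4 (fun t => (/ (1 - t)) ^ 3 * (lam * v1 t + u1 t))). now apply Hp.
Qed.

Definition G (s : R) : R := v s / s.
Definition N1 (s : R) : R := s * v1 s - v s.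
Definition N2 (s : R) : R := s ^ 2 * v2 s - 2 * s * v1 s + 2 * v s.
Definition G1 (s : R) : R := N1 s / s ^ 2.
Definition G2 (s : R) : R := N2 s / s ^ 3.

Lemma v_0 : v 0 = 0.
Proof. unfold v. rewrite RInt_point. apply Rmult_0_r. Qed.

Lemma is_derive_N1 (s : R) : s < 1 -> is_derive N1 s (s ^ 1 * v2 s).
Proof.
  intros Hs. apply (is_derive_eq _ _ (1 * v1 s + s * v2 s - v1 s)); [|ring].
  apply is_derive_Rminus; [|now apply is_derive_v].
  apply Derive.is_derive_mult; [exact (is_derive_id s) | now apply is_derive_v1].
Qed.

Lemma is_derive_N2 (s : R) : s < 1 -> is_derive N2 s (s ^ 2 * v3 s).
Proof.
  intros Hs. unfold N2.
  apply (is_derive_eq _ _ ((INR 2 * 1 * s ^ pred 2 * v2 s + s ^ 2 * v3 s)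
                            - (2 * 1 * v1 s + 2 * s * v2 s) + 2 * v1 s)); [|simpl; ring].
  apply is_derive_Rplus; [apply is_derive_Rminus|].
  - apply Derive.is_derive_mult; [|now apply is_derive_v2].
    apply (is_derive_pow (fun t => t)). exact (is_derive_id s).
  - apply Derive.is_derive_mult; [|now apply is_derive_v1].
    apply is_derive_scal. exact (is_derive_id s).
  - apply is_derive_scal, is_derive_v, Hs.
Qed.

Lemma is_derive_G (s : R) : 0 < s < 1 -> is_derive G s (G1 s).
Proof.
  intros Hs. apply (is_derive_ext (fun t => v t / t ^ 1)); [intros t; unfold G; now rewrite pow_1|].
  apply (is_derive_eq _ _ _ _ (is_derive_div_pow v 1 s _ ltac:(lra) (is_derive_v s ltac:(lra)))).
  unfold G1, N1. simpl. field. lra.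
Qed.

Lemma is_derive_G1 (s : R) : 0 < s < 1 -> is_derive G1 s (G2 s).
Proof.
  intros Hs. apply (is_derive_eq _ _ _ _ (is_derive_div_pow N1 2 s _ ltac:(lra) (is_derive_N1 s ltac:(lra)))).
  unfold G2, N2, N1. simpl. field. lra.
Qed.

Lemma continuous_G2 (s : R) : 0 < s < 1 -> continuous G2 s.
Proof.
  intros Hs. apply (continuous_of_is_derive _ _ _
    (is_derive_div_pow N2 3 s _ ltac:(lra) (is_derive_N2 s ltac:(lra)))).
Qed.

Lemma lim0_G : filterlim G (at_right 0) (locally (v1 0)).
Proof.
  apply (filterlim_ext (fun s => v s / s ^ 1)); [intros s; unfold G; now rewrite pow_1|].
  replace (v1 0) with (v1 0 / INR 1) by (simpl; field).
  apply lim_at_right0_div_pow; [exact v_0 | | ].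
  - intros t Ht. rewrite pow_O, Rmult_1_l. apply is_derive_v. lra.
  - exact (continuous_of_is_derive _ _ _ (is_derive_v1 0 Rlt_0_1)).
Qed.

Lemma lim0_G1 : filterlim G1 (at_right 0) (locally (v2 0 / 2)).
Proof.
  replace 2 with (INR 2) by (simpl; ring).
  apply lim_at_right0_div_pow; [unfold N1; rewrite v_0; ring | |].
  - intros t Ht. apply is_derive_N1. lra.
  - exact (continuous_of_is_derive _ _ _ (is_derive_v2 0 Rlt_0_1)).
Qed.

Lemma lim0_G2 : filterlim G2 (at_right 0) (locally (v3 0 / 3)).
Proof.
  replace 3 with (INR 3) by (simpl; ring).
  apply lim_at_right0_div_pow; [unfold N2; rewrite v_0; ring | |].
  - intros t Ht. apply is_derive_N2. lra.
  - apply continuous_v3, Rlt_0_1.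
Qed.

Hypothesis Hint : RInt (fun x => u x * kern lam x) 0 1 = 0.

Lemma v_tailn (s : R) : s < 1 -> v s = - tailn lam 0 u s.
Proof.
  intros Hs. unfold v, tailn, tail.
  assert (Hex : forall a b, ex_RInt (fun x => u x * kern lam x) a b)
    by (intros; apply ex_RInt_mul_kern; [exact Hlam | exact continuous_u]).
  assert (Hchasles := RInt_Chasles (fun x => u x * kern lam x) 0 s 1 (Hex _ _) (Hex _ _)).
  rewrite Hint in Hchasles. change (plus ?a ?b) with (a + b) in Hchasles.
  rewrite (RInt_ext (V := R_CompleteNormedModule) (fun x => (1 - x) ^ 0 * u x * kern lam x)
    (fun x => u x * kern lam x)) by (intros; simpl; ring).
  set (I0 := RInt (fun x => u x * kern lam x) 0 s) in *.
  set (I1 := RInt (fun x => u x * kern lam x) s 1) in *.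
  replace I0 with (- I1) by (change (@zero R_CompleteNormedModule) with 0 in Hchasles; lra).
  simpl. field.
Qed.

Lemma lam_v_u_tailn (s : R) : s < 1 -> lam * v s + u s = - ((1 - s) ^ 2 * tailn lam 2 u1 s).
Proof.
  intros Hs. rewrite v_tailn by exact Hs.
  assert (H := tailn_ibp lam Hlam 0 u u1 s Hs Hu continuous_u1).
  rewrite (tailn_ext lam 1 _ (fun x => (1 - x) * u1 x)), tailn_shift in H
    by (easy || intros; simpl; ring).
  simpl. lra.
Qed.

Lemma v1_tailn (s : R) : s < 1 -> v1 s = - tailn lam 2 u1 s.
Proof. intros Hs. unfold v1. rewrite lam_v_u_tailn by exact Hs. field. lra. Qed.

Lemma lam_v1_u1_tailn (s : R) : s < 1 ->
  lam * v1 s + u1 s = - ((1 - s) * tailn lam 3 (fun x => (1 - x) * u2 x - 2 * u1 x) s).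
Proof.
  intros Hs. rewrite v1_tailn by exact Hs.
  assert (H := tailn_ibp lam Hlam 2 u1 u2 s Hs Hu1 Hu2).
  rewrite (tailn_ext lam 3 _ (fun x => (1 - x) * u2 x - 2 * u1 x)) in H
    by (easy || intros; simpl; ring).
  lra.
Qed.

Lemma v2_tailn (s : R) : s < 1 ->
  v2 s = - tailn lam 4 u2 s - 2 * ((tailn lam 2 u1 s - tailn lam 3 u1 s) / (1 - s)).
Proof.
  intros Hs.
  assert (Hsplit : tailn lam 3 (fun x => (1 - x) * u2 x - 2 * u1 x) s
                   = (1 - s) * tailn lam 4 u2 s - 2 * tailn lam 3 u1 s).
  { rewrite (tailn_ext lam 3 _ (fun x => 1 * ((1 - x) * u2 x) + (-2) * u1 x)) by (easy || intros; ring).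
    rewrite tailn_lincomb, tailn_shift by (easy || exact continuous_u1 ||
      (intros x; apply (continuous_mult (fun x => 1 - x) u2); [|apply Hu2];
       apply (continuous_minus (fun _ => 1) (fun x => x)); [apply continuous_const | apply continuous_id])).
    ring. }
  unfold v2. rewrite lam_v_u_tailn, lam_v1_u1_tailn, Hsplit by exact Hs.
  field. lra.
Qed.

Lemma lim1_v : filterlim v (at_left 1) (locally (- (u 1 / lam))).
Proof.
  apply (filterlim_ext_loc (fun s => -1 * tailn lam 0 u s)).
  - unfold at_left, within. apply filter_forall. intros s Hs. rewrite v_tailn by exact Hs. ring.
  - replace (- (u 1 / lam)) with (-1 * (u 1 / lam)) by ring.
    apply filterlim_Rscal, tailn_lim; [exact Hlam | exact continuous_u].
Qed.

Lemma lim1_v1 : filterlim v1 (at_left 1) (locally (- (u1 1 / lam))).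
Proof.
  apply (filterlim_ext_loc (fun s => -1 * tailn lam 2 u1 s)).
  - unfold at_left, within. apply filter_forall. intros s Hs. rewrite v1_tailn by exact Hs. ring.
  - replace (- (u1 1 / lam)) with (-1 * (u1 1 / lam)) by ring.
    apply filterlim_Rscal, tailn_lim; [exact Hlam | exact continuous_u1].
Qed.

Lemma lim1_v2 : filterlim v2 (at_left 1) (locally (- (u2 1 / lam) - 2 * (u1 1 / lam ^ 2))).
Proof.
  apply (filterlim_ext_loc
    (fun s => - tailn lam 4 u2 s - 2 * ((tailn lam 2 u1 s - tailn lam 3 u1 s) / (1 - s)))).
  - unfold at_left, within. apply filter_forall. intros s Hs. now rewrite v2_tailn.
  - apply filterlim_Rminus.
    + replace (- (u2 1 / lam)) with (-1 * (u2 1 / lam)) by ring.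
      apply (filterlim_ext (fun s => -1 * tailn lam 4 u2 s)); [intros; ring|].
      apply filterlim_Rscal, tailn_lim; [exact Hlam | exact Hu2].
    + apply filterlim_Rscal, (tailn_step_lim lam Hlam 2 u1 u2 Hu1 Hu2).
Qed.

Lemma lim1_G : filterlim G (at_left 1) (locally (- (u 1 / lam))).
Proof.
  apply (filterlim_ext (fun s => v s * / s ^ 1)); [intros s; unfold G; now rewrite pow_1|].
  rewrite <- (Rmult_1_r (- (u 1 / lam))).
  apply filterlim_Rmult; [exact lim1_v | apply lim1_inv_pow].
Qed.

Lemma lim1_G1 : filterlim G1 (at_left 1) (locally (u 1 / lam - u1 1 / lam)).
Proof.
  apply (filterlim_ext (fun s => (s ^ 1 * v1 s - v s) * / s ^ 2));
    [intros s; unfold G1, N1, Rdiv; now rewrite pow_1|].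
  replace (u 1 / lam - u1 1 / lam) with ((1 * - (u1 1 / lam) - - (u 1 / lam)) * 1) by ring.
  apply filterlim_Rmult; [|apply lim1_inv_pow].
  apply filterlim_Rminus; [apply filterlim_Rmult; [apply lim1_pow | exact lim1_v1] | exact lim1_v].
Qed.

Lemma lim1_G2 : filterlim G2 (at_left 1)
  (locally (- (u2 1 / lam) - 2 * (u1 1 / lam ^ 2) + 2 * (u1 1 / lam) - 2 * (u 1 / lam))).
Proof.
  apply (filterlim_ext (fun s => (s ^ 2 * v2 s - 2 * s ^ 1 * v1 s + 2 * v s) * / s ^ 3));
    [intros s; unfold G2, N2, Rdiv; now rewrite pow_1|].
  replace (- (u2 1 / lam) - 2 * (u1 1 / lam ^ 2) + 2 * (u1 1 / lam) - 2 * (u 1 / lam))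
    with ((1 * (- (u2 1 / lam) - 2 * (u1 1 / lam ^ 2)) - 2 * 1 * - (u1 1 / lam)
           + 2 * - (u 1 / lam)) * 1) by ring.
  apply filterlim_Rmult; [|apply lim1_inv_pow].
  apply filterlim_Rplus; [apply filterlim_Rminus|].
  - apply filterlim_Rmult; [apply lim1_pow | exact lim1_v2].
  - apply filterlim_Rmult; [apply filterlim_Rscal, lim1_pow | exact lim1_v1].
  - apply filterlim_Rscal. exact lim1_v.
Qed.

Lemma G_C2_extension : exists Gbar : R -> R,
  (forall s, 0 < s < 1 -> Gbar s = G s) /\ C2_01 Gbar.
Proof.
  exists (glue G (v1 0) (- (u 1 / lam))). split; [intros s Hs; now apply glue_in|].
  exists (glue G1 (v2 0 / 2) (u 1 / lam - u1 1 / lam)).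
  exists (glue G2 (v3 0 / 3)
    (- (u2 1 / lam) - 2 * (u1 1 / lam ^ 2) + 2 * (u1 1 / lam) - 2 * (u 1 / lam))).
  split; [|split].
  - apply deriv_within01_glue;
      [exact is_derive_G | exact lim0_G | exact lim0_G1 | exact lim1_G | exact lim1_G1].
  - apply deriv_within01_glue;
      [exact is_derive_G1 | exact lim0_G1 | exact lim0_G2 | exact lim1_G1 | exact lim1_G2].
  - apply cont_within01_glue; [exact continuous_G2 | exact lim0_G2 | exact lim1_G2].
Qed.

End Solution.

Lemma RInt_centered_kern (lam : R) (f : R -> R) : 0 < lam -> (forall x, continuous f x) ->
  RInt (fun x => (f x - RInt (fun y => rho lam y * f y) 0 1) * kern lam x) 0 1 = 0.
Proof.
  intros Hlam Hf.
  set (I := RInt (fun x => f x * kern lam x) 0 1).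
  set (K := RInt (fun x => 1 * kern lam x) 0 1).
  assert (HK : lam * exp lam * K = 1).
  { assert (H1 := tail_one lam Hlam 0 Rlt_0_1). unfold tail in H1.
    rewrite Rminus_0_r, Rdiv_1_r in H1. fold K in H1. now rewrite Rmult_assoc. }
  assert (Hc : RInt (fun y => rho lam y * f y) 0 1 = lam * exp lam * I :> R).
  { rewrite (RInt_ext (V := R_CompleteNormedModule) _
      (fun y => (lam * exp lam) * (f y * kern lam y) + 0 * 0))
      by (intros; rewrite rho_kern; simpl; ring).
    rewrite RInt_lincomb; [unfold I; ring | now apply ex_RInt_mul_kern | apply ex_RInt_const]. }
  rewrite Hc.
  rewrite (RInt_ext (V := R_CompleteNormedModule) _
    (fun x => 1 * (f x * kern lam x) + (- (lam * exp lam * I)) * (1 * kern lam x)))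
    by (intros; simpl; ring).
  rewrite RInt_lincomb
    by (apply ex_RInt_mul_kern; [exact Hlam | intros; apply continuous_const || apply Hf]).
  fold I K. replace (1 * I + - (lam * exp lam * I) * K) with (I * (1 - lam * exp lam * K)) by ring.
  rewrite HK, Rminus_eq_0. apply Rmult_0_r.
Qed.

Lemma Gfun_eq_G (lam : R) (h u : R -> R) (s : R) :
  0 < s < 1 -> (forall x, I01 x -> u x = htilde lam h x) -> Gfun lam h s = G lam u s.
Proof.
  intros Hs Hu. unfold G, v, Gfun.
  rewrite (RInt_ext (V := R_CompleteNormedModule)
    (fun x => htilde lam h x / (1 - x) ^ 2 * exp (- lam / (1 - x))) (fun x => u x * kern lam x)).
  - unfold Rdiv. ring.
  - rewrite Rmin_left, Rmax_right by lra. intros x Hx.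
    rewrite Hu by (unfold I01; lra). unfold kern.
    destruct (Rlt_dec x 1); [simpl; unfold Rdiv; ring | lra].
Qed.

Theorem lemma5 (lam : R) (h : R -> R) (Hlam : 0 < lam) (Hh : C2_01 h) :
  exists Gbar : R -> R,
    (forall s, 0 < s < 1 -> Gbar s = Gfun lam h s) /\ C2_01 Gbar.
Proof.
  destruct (C2_01_extension h Hh) as [H [H1 [H2 [HHh [HH [HH1 HH2]]]]]].
  set (c := RInt (fun x => rho lam x * h x) 0 1).
  set (u := fun x => H x - c).
  assert (Hu : forall x, is_derive u x (H1 x)).
  { intros x. apply (is_derive_eq _ _ (H1 x - 0)); [|ring].
    apply is_derive_Rminus; [apply HH | exact (is_derive_const c x)]. }
  assert (Hc : c = RInt (fun x => rho lam x * H x) 0 1).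
  { apply RInt_ext. rewrite Rmin_left, Rmax_right by lra. intros x Hx.
    rewrite HHh by (unfold I01; lra). reflexivity. }
  assert (Hint : RInt (fun x => u x * kern lam x) 0 1 = 0).
  { unfold u. rewrite Hc. apply RInt_centered_kern; [exact Hlam|].
    intros x. exact (continuous_of_is_derive _ _ _ (HH x)). }
  destruct (G_C2_extension lam Hlam u H1 H2 Hu HH1 HH2 Hint) as [Gbar [HG HC2]].
  exists Gbar. split; [|exact HC2].
  intros s Hs. rewrite HG by exact Hs. symmetry. apply Gfun_eq_G; [exact Hs|].
  intros x Hx. unfold u, htilde. now rewrite HHh.
Qed.
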